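(* Let $k,\Delta$ be integers with $\Delta>2$ and $k\ge 2\Delta-2$, and let $n> c\cdot\binom{k}{\Delta}\log\binom{k}{\Delta}$ for some constant $c>0$. Let $\mathbf{A}$ and $\mathbf{B}$ be two $n\times k$ binary matrices, each drawn from the uniform ensemble with parameters $(k,\Delta)$, and assume $\mathbf{A}\mathbf{A}^T=\mathbf{B}\mathbf{B}^T$. Then, with overwhelming probability, $\mathbf{B}=\mathbf{A}\mathbf{P}$ for some $k\times k$ permutation matrix $\mathbf{P}$, i.e. $\mathbf{B}$ is a column-permuted version of $\mathbf{A}$.
   Context: $T_k(\Delta)=\{\mathbf{c}\in\{0,1\}^k : \text{the Hamming weight of }\mathbf{c}\text{ is }\Delta\}$. An $n\times k$ binary matrix is drawn from the uniform ensemble if its $n$ rows are drawn independently and uniformly at random from $T_k(\Delta)$. *)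

From mathcomp Require Import all_boot all_order all_algebra all_fingroup.
From Stdlib Require Import Reals.
Set Implicit Arguments. Unset Strict Implicit. Unset Printing Implicit Defensive.
Import GRing.Theory.
Local Open Scope ring_scope.

Definition intmx (n k : nat) (A : 'M[bool]_(n, k)) : 'M[int]_(n, k) :=
  map_mx (fun b : bool => Posz (b : nat)) A.

Definition row_weight (n k : nat) (A : 'M[bool]_(n, k)) (i : 'I_n) : nat :=
  #|[set j | A i j]|.

(* Support of the uniform ensemble with parameters (k, Delta): every row
   lies in T_k(Delta).  Drawing the n rows independently and uniformly from
   T_k(Delta) is the same as drawing A uniformly from this finite set. *)
Definition ensemble (n k Delta : nat) : {set 'M[bool]_(n, k)} :=
  [set A | [forall i, row_weight A i == Delta]].

Definition gram (n k : nat) (A : 'M[bool]_(n, k)) : 'M[int]_n :=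
  (intmx A *m (intmx A)^T).

Definition col_permuted (n k : nat) (A B : 'M[bool]_(n, k)) : bool :=
  [exists s : 'S_k, intmx B == (intmx A *m perm_mx s)].

Definition bad (n k Delta : nat) (A : 'M[bool]_(n, k)) : bool :=
  [exists B in ensemble n k Delta, (gram B == gram A) && ~~ col_permuted A B].

Definition prob_bad (n k Delta : nat) : R :=
  (INR #|[set A in ensemble n k Delta | bad Delta A ]| /
   INR #|ensemble n k Delta|).

(* If every Delta-subset of {0, ..., k-1} occurs as a row support of A, then
   A A^T = B B^T forces B = A P.  Indeed, the map sending the support of row i
   of A to that of row i of B preserves intersection sizes, and for k > 2 Delta
   every such map on Delta-sets is induced by a permutation: the images of the
   (e+1)-sets containing a fixed e-set W pairwise meet in e points and there are
   more than e + 2 of them, so they form a sunflower, and sending W to its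
   kernel gives an intersection-preserving map on e-sets; induct on e.
   A fixed Delta-set is missed by all n rows with probability (1 - 1/C)^n,
   C = 'C(k, Delta), so the bad event has probability at most
   C (1 - 1/C)^n <= C exp (- n / C) <= 1 / C once n > 2 C ln C, and
   C >= k - Delta + 1 grows with k. *)

From mathcomp Require Import all_boot all_algebra all_fingroup zify.

Set Implicit Arguments. Unset Strict Implicit. Unset Printing Implicit Defensive.
Import GRing.Theory.

Section SetCardinals.
Variable T : finType.
Implicit Types A B W : {set T}.

Lemma subset_of_card_setI A B : #|A| <= #|A :&: B| -> A \subset B.
Proof. by move=> AB; apply/setIidPl/eqP; rewrite eqEcard subsetIl. Qed.

Lemma eq_of_card_setI A B : #|A| = #|B| -> #|A| <= #|A :&: B| -> A = B.
Proof.
by move=> AB /subset_of_card_setI sAB; apply/eqP; rewrite eqEcard sAB AB leqnn.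
Qed.

Lemma exists_two_notin W : #|W| + 2 <= #|T| ->
  exists z1 z2, [/\ z1 \notin W, z2 \notin W & z1 != z2].
Proof.
move=> Wsmall; have : 1 < #|~: W| by rewrite cardsCs setCK; lia.
by case/card_gt1P => z1 [z2 [z1W z2W z12]]; exists z1, z2; rewrite -!in_setC.
Qed.

Lemma setU1_meet W z1 z2 : z1 != z2 -> (z1 |: W) :&: (z2 |: W) = W.
Proof.
move=> z12; apply/setP => x; rewrite !inE.
case: (x \in W); rewrite ?orbT ?orbF //=.
by case: eqP => // ->; rewrite (negbTE z12).
Qed.

Lemma setU1_meet_outside W W' z z' : z != z' -> z \notin W' -> z' \notin W ->
  (z |: W) :&: (z' |: W') = W :&: W'.
Proof.
move=> zz' zW' z'W; apply/setP => x; rewrite !inE.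
case: (eqVneq x z) => [->|_]; first by rewrite (negbTE zz') (negbTE zW') !andbF.
by case: (eqVneq x z') => [->|_]; rewrite ?(negbTE z'W).
Qed.

Lemma setU1_meet_crossed W W' a b : a \in W' -> b \in W ->
  (a |: W) :&: (b |: W') = a |: (b |: (W :&: W')).
Proof.
move=> aW' bW; apply/setP => x; rewrite !inE.
case: (eqVneq x a) => [->|_]; first by rewrite aW' orbT.
by case: (eqVneq x b) => [->|]; rewrite ?bW.
Qed.

End SetCardinals.

Lemma leq_card_bigcup (I T : finType) (P : {pred I}) (F : I -> {set T}) :
  #|\bigcup_(i in P) F i| <= \sum_(i in P) #|F i|.
Proof.
elim/big_ind2: _ => [|m A p B AP BP|i _]; rewrite ?cards0 //.
exact: leq_trans (leq_card_setU A B).1 (leq_add AP BP).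
Qed.

Section Sunflower.
Variables (T : finType) (e : nat) (F : {set {set T}}).
Implicit Types A B C D : {set T}.

Hypothesis F_card : {in F, forall A, #|A| = e.+1}.
Hypothesis F_meet : {in F &, forall A B, A != B -> #|A :&: B| = e}.
Hypothesis F_large : e.+2 < #|F|.

Let F_meet_ge : {in F &, forall A B, e <= #|A :&: B|}.
Proof.
by move=> A B AF BF; case: (eqVneq A B) => [<-|/F_meet-> //]; rewrite setIid F_card.
Qed.

(* Otherwise every member of F lies in the (e+2)-set A :|: B, which has only
   e + 2 subsets of size e + 1. *)
Lemma sunflower_kernel A B C : A \in F -> B \in F -> C \in F -> A != B ->
  A :&: B \subset C.
Proof.
move=> AF BF CF AB; set I := A :&: B; set U := A :|: B.
have cardI : #|I| = e by exact: F_meet.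
have cardU : #|U| = e.+2.
  by have := cardsUI A B; rewrite -/U -/I cardI (F_card AF) (F_card BF); lia.
apply/negPn/negP => IC.
have inU D : D \in F -> ~~ (I \subset D) -> D \subset U.
  move=> DF ID; apply: subset_of_card_setI; rewrite (F_card DF).
  have : #|D :&: I| < e.
    rewrite -cardI proper_card // properEneq subsetIr andbT.
    by apply: contra ID => /eqP <-; exact: subsetIl.
  have := F_meet_ge DF AF; have := F_meet_ge DF BF.
  by have := cardsUI (D :&: A) (D :&: B); rewrite -setIUr setIACA setIid -/I -/U; lia.
have FU D : D \in F -> D \subset U.
  move=> DF; have [ID|/(inU D DF)//] := boolP (I \subset D).
  apply: (@subset_trans _ _ (I :|: C)); last first.
    by rewrite subUset (inU C CF IC) andbT subIset ?subsetUl.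
  apply: subset_of_card_setI; rewrite (F_card DF).
  have : #|I :&: C| < e.
    rewrite -cardI proper_card // properEneq subsetIl andbT.
    by apply: contra IC => /eqP <-; exact: subsetIr.
  have := subset_leq_card (subsetIr D (I :&: C)); have := F_meet_ge DF CF.
  have := cardsUI (D :&: I) (D :&: C).
  by rewrite -setIUr setIACA setIid (setIidPr ID); lia.
have : F \subset [set D : {set T} | D \subset U & #|D| == e.+1].
  by apply/subsetP => D DF; rewrite inE FU //= F_card.
by move/subset_leq_card; rewrite cards_draws cardU binSn; lia.
Qed.

End Sunflower.

Section MeetPreserving.
Variable T : finType.
Implicit Types (S W : {set T}) (f : {set T} -> {set T}).

Definition meet_preserving e f :=
  forall S S', #|S| = e -> #|S'| = e -> #|f S :&: f S'| = #|S :&: S'|.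

Lemma meet_preserving_card e f S : meet_preserving e f -> #|S| = e -> #|f S| = e.
Proof. by move=> fP Se; rewrite -[f S]setIid fP // setIid. Qed.

Lemma meet_preserving_inj e f S S' : meet_preserving e f ->
  #|S| = e -> #|S'| = e -> f S = f S' -> S = S'.
Proof.
move=> fP Se S'e fSS'; apply: eq_of_card_setI; first by rewrite Se S'e.
by rewrite -fP // fSS' setIid (meet_preserving_card fP S'e) Se.
Qed.

Definition core f W := \bigcap_(z in ~: W) f (z |: W).

Lemma core_sub f W z : z \notin W -> core f W \subset f (z |: W).
Proof. by move=> zW; apply: (bigcap_inf z); rewrite inE. Qed.

Section Core.
Variables (e : nat) (f : {set T} -> {set T}).
Hypotheses (fP : meet_preserving e.+1 f) (T_large : 2 * e.+1 < #|T|).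

(* The #|T| - e > e + 2 sets f (y |: W), y \notin W, pairwise meet in e points. *)
Lemma petals_sunflower W z1 z2 z : #|W| = e ->
  z1 \notin W -> z2 \notin W -> z \notin W -> z1 != z2 ->
  f (z1 |: W) :&: f (z2 |: W) \subset f (z |: W).
Proof.
move=> We z1W z2W zW z12; set F := [set f (y |: W) | y in ~: W].
have cardU1 y : y \notin W -> #|y |: W| = e.+1 by move=> yW; rewrite cardsU1 yW We.
have f_inj : {in ~: W &, injective (fun y => f (y |: W))}.
  move=> y y'; rewrite !inE => yW y'W.
  move/(meet_preserving_inj fP (cardU1 y yW) (cardU1 y' y'W))/setP/(_ y).
  by rewrite !inE eqxx (negbTE yW) !orbF => /esym/eqP.
have inF y : y \notin W -> f (y |: W) \in F by move=> yW; rewrite imset_f // inE.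
apply: (@sunflower_kernel _ e F); rewrite ?inF //.
- move=> _ /imsetP[y yW ->]; rewrite inE in yW.
  exact: meet_preserving_card (cardU1 y yW).
- move=> _ _ /imsetP[y yW ->] /imsetP[y' y'W ->]; rewrite !inE in yW y'W => neq.
  rewrite fP ?cardU1 // setU1_meet //.
  by apply: contraNneq neq => ->.
- by rewrite card_in_imset // cardsCs setCK We; lia.
- by apply: contra_neq z12; apply: f_inj; rewrite inE.
Qed.

Lemma core_meet2 W z1 z2 : #|W| = e -> z1 \notin W -> z2 \notin W -> z1 != z2 ->
  core f W = f (z1 |: W) :&: f (z2 |: W).
Proof.
move=> We z1W z2W z12; apply/eqP; rewrite eqEsubset subsetI !core_sub //=.
by apply/bigcapsP => z; rewrite inE => zW; apply: petals_sunflower.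
Qed.

Lemma card_core W : #|W| = e -> #|core f W| = e.
Proof.
move=> We; have /exists_two_notin[z1 [z2 [z1W z2W z12]]] : #|W| + 2 <= #|T| by lia.
by rewrite (core_meet2 We z1W z2W z12) fP ?cardsU1 ?z1W ?z2W ?We // setU1_meet.
Qed.

Lemma core_meet_le W W' : #|W| = e -> #|W'| = e ->
  #|core f W :&: core f W'| <= #|W :&: W'|.
Proof.
move=> We W'e; have /exists_two_notin[z [z' [zWW' z'WW' zz']]] : #|W :|: W'| + 2 <= #|T|.
  by have := (leq_card_setU W W').1; rewrite We W'e; lia.
move: zWW' z'WW'; rewrite !inE !negb_or => /andP[zW zW'] /andP[z'W z'W'].
have zWe : #|z |: W| = e.+1 by rewrite cardsU1 zW We.
have z'W'e : #|z' |: W'| = e.+1 by rewrite cardsU1 z'W' W'e.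
rewrite -(setU1_meet_outside zz' zW' z'W) -[X in _ <= X](fP zWe z'W'e).
by apply/subset_leq_card/setISS; apply: core_sub.
Qed.

(* Crossing a \in W' :\: W and b \in W :\: W' adds two points to the meet,
   while f (a |: W) and f (b |: W') exceed the cores by one point each. *)
Lemma core_meet_ge W W' : #|W| = e -> #|W'| = e ->
  #|W :&: W'| <= #|core f W :&: core f W'|.
Proof.
move=> We W'e; have [<-|WW'] := eqVneq W W'; first by rewrite !setIid card_core We.
have [a aW' aW] : exists2 a, a \in W' & a \notin W.
  apply/subsetPn; apply: contra WW' => W'W.
  by rewrite eq_sym eqEcard W'W We W'e leqnn.
have [b bW bW'] : exists2 b, b \in W & b \notin W'.
  apply/subsetPn; apply: contra WW' => sWW'.
  by rewrite eqEcard sWW' We W'e leqnn.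
set X := f (a |: W); set Y := f (b |: W'); set K := core f W; set K' := core f W'.
have cardX : #|X :\: K| = 1.
  rewrite cardsD (setIidPr (core_sub f aW)) card_core //.
  by rewrite (meet_preserving_card fP) ?subSnn // cardsU1 aW We.
have cardY : #|Y :\: K'| = 1.
  rewrite cardsD (setIidPr (core_sub f bW')) card_core //.
  by rewrite (meet_preserving_card fP) ?subSnn // cardsU1 bW' W'e.
have cardXY : #|X :&: Y| = #|W :&: W'| + 2.
  rewrite fP ?cardsU1 ?aW ?bW' ?We ?W'e // setU1_meet_crossed // !cardsU1 !inE.
  have ab : a != b by apply: contraNneq bW' => <-.
  by rewrite (negbTE ab) (negbTE aW) (negbTE bW') !andbF orbF; lia.
have : X :&: Y \subset (K :&: K') :|: (X :\: K) :|: (Y :\: K').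
  by apply/subsetP => x; rewrite !inE => /andP[-> ->]; case: (x \in K); case: (x \in K').
move/subset_leq_card; rewrite cardXY.
have := (leq_card_setU (K :&: K' :|: X :\: K) (Y :\: K')).1.
have := (leq_card_setU (K :&: K') (X :\: K)).1.
lia.
Qed.

Lemma core_meet_preserving : meet_preserving e (core f).
Proof.
by move=> W W' We W'e; apply/eqP; rewrite eqn_leq core_meet_le ?core_meet_ge.
Qed.

End Core.

(* Induction on e: the permutation inducing core f on e-sets also induces f,
   since every x in an (e+1)-set S lies in core f (S :\ y) for some y != x.
   The case e = 0 says nothing about f on singletons, hence two base cases. *)
Theorem meet_preserving_perm e f : meet_preserving e f -> 2 * e < #|T| ->
  exists s : {perm T}, forall S, #|S| = e -> f S = s @: S.
Proof.
elim: e f => [|[|e] IHe] f fP T_large.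
- exists 1%g => S /eqP; rewrite cards_eq0 => /eqP ->.
  by have /eqP := meet_preserving_card fP (cards0 T); rewrite cards_eq0 imset0 => /eqP.
- pose g x := odflt x [pick y in f [set x]].
  have fE x : f [set x] = [set g x].
    have /eqP/cards1P[y fxy] := meet_preserving_card fP (cards1 x).
    by rewrite /g fxy; case: pickP => [y' /set1P -> | /(_ y)]; rewrite ?set11.
  have g_inj : injective g.
    move=> x x' gxx'; apply/set1_inj/(meet_preserving_inj fP); rewrite ?cards1 //.
    by rewrite !fE gxx'.
  by exists (perm g_inj) => S /eqP/cards1P[x ->]; rewrite fE imset_set1 permE.
- have [|s sE] := IHe (core f) (core_meet_preserving fP T_large); first lia.
  exists s => S Se; apply/eqP; rewrite eq_sym eqEcard.
  rewrite card_imset ?Se ?(meet_preserving_card fP Se) ?leqnn ?andbT; last exact: perm_inj.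
  apply/subsetP => _ /imsetP[x xS ->].
  have [y yS yx] : exists2 y, y \in S & y != x.
    have /card_gt1P[y1 [y2 [y1S y2S y12]]] : 1 < #|S| by rewrite Se.
    by case: (eqVneq y1 x) => [y1x|]; [exists y2; rewrite // -y1x eq_sym | exists y1].
  have S_y : #|S :\ y| = e.+1 by move: Se; rewrite (cardsD1 y) yS => -[].
  have := core_sub f (negbT (setD11 y S)); rewrite setD1K // => /subsetP; apply.
  by rewrite sE // imset_f // !inE xS eq_sym yx.
Qed.

End MeetPreserving.

Section BinaryRows.
Variables n k : nat.
Implicit Types A B : 'M[bool]_(n, k).

Definition row_support A i : {set 'I_k} := [set j | A i j].

Lemma gram_row_support A i j :
  gram A i j = Posz #|row_support A i :&: row_support A j|.
Proof.
rewrite !mxE -sum1_card -natz natr_sum [RHS]big_mkcond; apply: eq_bigr => l _.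
by rewrite !mxE !inE; case: (A i l); case: (A j l).
Qed.

Lemma card_row_support D A i : A \in ensemble n k D -> #|row_support A i| = D.
Proof. by rewrite inE => /forallP/(_ i)/eqP. Qed.

Lemma col_permuted_of_gram D A B : 2 * D < k -> A \in ensemble n k D ->
  (forall S : {set 'I_k}, #|S| = D -> exists i, row_support A i = S) ->
  gram B = gram A -> col_permuted A B.
Proof.
move=> k_large AD A_onto gramBA.
have meetB i j : #|row_support B i :&: row_support B j| =
                 #|row_support A i :&: row_support A j|.
  have := congr1 (fun M : 'M[int]_n => M i j) gramBA.
  by rewrite /= !gram_row_support => -[].
pose f (S : {set 'I_k}) :=
  if [pick i | row_support A i == S] is Some i then row_support B i else S.
have fE (S : {set 'I_k}) : #|S| = D ->
    exists2 i, row_support A i = S & f S = row_support B i.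
  move=> SD; have [i0 i0S] := A_onto S SD; rewrite /f.
  by case: pickP => [i /eqP|/(_ i0)]; [exists i | rewrite i0S eqxx].
have fP : meet_preserving D f.
  move=> S S' /fE[i <- ->] /fE[j <- ->]; exact: meetB.
have [|s sE] := meet_preserving_perm fP; first by rewrite card_ord.
have cardB i : #|row_support B i| = D.
  by rewrite -[row_support B i]setIid meetB setIid (card_row_support i AD).
have rowB i : row_support B i = s @: row_support A i.
  have [i0 i0i fi] := fE _ (card_row_support i AD).
  rewrite -sE ?(card_row_support i AD) // fi.
  apply: eq_of_card_setI; first by rewrite !cardB.
  by rewrite meetB i0i setIid cardB (card_row_support i AD).
apply/existsP; exists s; apply/eqP/matrixP => i j.
rewrite -[s]invgK -col_permE !mxE.
have -> : B i j = (j \in row_support B i) by rewrite inE.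
by rewrite rowB -{1}(permKV s j) mem_imset ?inE //; exact: perm_inj.
Qed.

Lemma card_rows_in (P : {set {set 'I_k}}) :
  #|[set A | [forall i, row_support A i \in P]]| = #|P| ^ n.
Proof.
pose rows A := [ffun i => row_support A i].
have rows_inj : injective rows.
  move=> A A' /ffunP rowsAA'; apply/matrixP => i j.
  by have /setP/(_ j) := rowsAA' i; rewrite !ffunE !inE.
rewrite -(card_imset _ rows_inj) -[n in _ ^ n]card_ord -card_ffun_on.
apply: eq_card => g; apply/imsetP/ffun_onP => [[A] | gP].
  by rewrite inE => /forallP AP -> i; rewrite ffunE.
exists (\matrix_(i, j) (j \in g i))%R; last first.
  by apply/ffunP => i; rewrite ffunE; apply/setP => j; rewrite !inE mxE.
rewrite inE; apply/forallP => i.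
by have := gP i; congr (_ \in P); apply/setP => j; rewrite !inE mxE.
Qed.

Definition subsets_of_size D := [set S : {set 'I_k} | #|S| == D].

Lemma ensembleE D :
  ensemble n k D = [set A | [forall i, row_support A i \in subsets_of_size D]].
Proof. by apply/setP => A; rewrite !inE; apply: eq_forallb => i; rewrite inE. Qed.

Lemma card_subsets_of_size D : #|subsets_of_size D| = 'C(k, D).
Proof. by rewrite card_draws card_ord. Qed.

Lemma card_ensemble D : #|ensemble n k D| = 'C(k, D) ^ n.
Proof. by rewrite ensembleE card_rows_in card_subsets_of_size. Qed.

Lemma bad_sub_missing_row D : 2 * D < k ->
  [set A in ensemble n k D | bad D A] \subset
  \bigcup_(S in subsets_of_size D)
     [set A | [forall i, row_support A i \in subsets_of_size D :\ S]].
Proof.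
move=> k_large; apply/subsetP => A; rewrite inE.
case/andP => AD /existsP[B /and3P[_ /eqP gramBA not_perm]].
have [/exists_inP[S SD missing] | /exists_inPn A_onto] :=
  boolP [exists S in subsets_of_size D, [forall i, row_support A i != S]].
  apply/bigcupP; exists S; rewrite // inE; apply/forallP => i.
  by rewrite !inE (forallP missing i) (card_row_support i AD) /=.
case/negP: not_perm; apply: (col_permuted_of_gram k_large AD _ gramBA) => S SD.
have := A_onto S; rewrite inE SD eqxx => /(_ isT)/forallPn[i /negPn/eqP rowAS].
by exists i.
Qed.

Lemma card_bad D : 2 * D < k ->
  #|[set A in ensemble n k D | bad D A]| <= 'C(k, D) * ('C(k, D) - 1) ^ n.
Proof.
move=> k_large; apply: leq_trans (subset_leq_card (bad_sub_missing_row k_large)) _.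
apply: leq_trans (leq_card_bigcup _ _) _.
rewrite -card_subsets_of_size -sum_nat_const; apply: leq_sum => S SD.
by rewrite card_rows_in (cardsD1 S (subsets_of_size D)) SD add1n subn1.
Qed.

End BinaryRows.

Lemma ltn_sub_bin k D : 0 < D <= k -> k - D < 'C(k, D).
Proof.
elim: k => [|k IHk] /andP[D_gt0]; first lia.
rewrite leq_eqVlt => /orP[/eqP->|]; first by rewrite subnn binn.
case: D D_gt0 IHk => // D _ IHk D_lt; have := IHk D_lt.
have : 0 < 'C(k, D) by rewrite bin_gt0; lia.
by rewrite binS; lia.
Qed.

From Stdlib Require Import Reals Lra.

Lemma INR_expn m p : INR (expn m p) = (INR m ^ p)%R.
Proof. by elim: p => [|p IHp] //; rewrite expnS mult_INR IHp. Qed.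

Lemma prob_bad_le n k D : 2 * D < k ->
  (prob_bad n k D <= INR 'C(k, D) * (1 - / INR 'C(k, D)) ^ n)%R.
Proof.
move=> k_large; set C := 'C(k, D).
have C_pos : (0 < INR C)%R by apply: lt_0_INR; apply/ltP; rewrite bin_gt0; lia.
have bad_le : (INR #|[set A in ensemble n k D | bad D A]| <= INR C * (INR C - 1) ^ n)%R.
  have /leP/le_INR := card_bad n k_large.
  by rewrite mult_INR INR_expn minus_INR //; apply/leP; rewrite bin_gt0; lia.
have -> : (1 - / INR C = (INR C - 1) * / INR C)%R by field; lra.
rewrite /prob_bad card_ensemble INR_expn Rpow_mult_distr pow_inv -Rmult_assoc.
by apply: Rmult_le_compat_r => //; apply/Rlt_le/Rinv_0_lt_compat/pow_lt.
Qed.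

(* (1 - 1/x)^n <= exp (- n / x) < exp (- 2 ln x) = 1 / x^2. *)
Lemma tail_le_inv (x : R) (n : nat) : (1 <= x)%R -> (2 * x * ln x < INR n)%R ->
  (x * (1 - / x) ^ n <= / x)%R.
Proof.
move=> x_ge1 n_large; have x_pos : (0 < x)%R by lra.
have inv_le1 : (/ x <= 1)%R by rewrite -Rinv_1; apply: Rinv_le_contravar; lra.
have pow_le : ((1 - / x) ^ n <= exp (- (INR n / x)))%R.
  have exp_ge := exp_ineq1_le (- / x).
  apply: Rle_trans (pow_incr _ _ n (conj _ _)) _; [lra | exact: exp_ge |].
  rewrite -Rpower_pow; last exact: exp_pos.
  by rewrite /Rpower ln_exp; apply: Req_le; congr exp; field; lra.
have exp_lt : (exp (- (INR n / x)) < / x * / x)%R.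
  rewrite -Rinv_mult -{2 3}(exp_ln x) // -exp_plus -exp_Ropp.
  apply/exp_increasing/Ropp_lt_contravar/(Rmult_lt_reg_r x) => //.
  by rewrite /Rdiv Rmult_assoc Rinv_l; lra.
apply: (Rle_trans _ (x * (/ x * / x))); first by apply: Rmult_le_compat_l; lra.
by apply: Req_le; field; lra.
Qed.

Theorem lemma1 :
  exists c : R, (0 < c)%R /\
  forall Delta : nat, (2 < Delta)%N ->
  forall eps : R, (0 < eps)%R ->
  exists K : nat, forall k n : nat,
    (K <= k)%N -> (2 * Delta - 2 <= k)%N ->
    (c * INR 'C(k, Delta) * ln (INR 'C(k, Delta)) < INR n)%R ->
    (prob_bad n k Delta <= eps)%R.
Proof.
exists 2%R; split; first lra.
move=> D D_gt2 eps eps_pos; have [N N_gt] := INR_unbounded (/ eps).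
exists (2 * D + 1 + N) => k n k_ge _ n_large.
have k_large : 2 * D < k by lia.
set C := 'C(k, D) in n_large *.
have C_gt : (/ eps < INR C)%R.
  apply: Rlt_le_trans N_gt _; apply/le_INR/leP.
  by have := @ltn_sub_bin k D; rewrite -/C; lia.
have C_ge1 : (1 <= INR C)%R by apply: (le_INR 1); apply/leP; rewrite bin_gt0; lia.
apply: Rle_trans (prob_bad_le n k_large) _; rewrite -/C.
apply: Rle_trans (tail_le_inv C_ge1 n_large) _.
rewrite -[eps]Rinv_inv; apply/Rlt_le/Rinv_lt_contravar => //.
by apply: Rmult_lt_0_compat; [apply: Rinv_0_lt_compat | lra].
Qed.
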